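(* For $n\ge 3$ and $r>0$, let $T_n(r)$ be a regular $n$-gon centered at the origin whose vertices lie at distance $r$ from the origin. Then $P_{\gamma_2}(T_n(r))<\sqrt{2/\pi}$ for every $r>0$ and every $n\ge 3$.
   Context: For a convex set $\Omega\subset\mathbb{R}^2$, its Gaussian perimeter is $P_{\gamma_2}(\Omega)=\frac{1}{2\pi}\int_{\partial\Omega}\exp\left(-\frac{|\mathbf{x}|^2}{2}\right)d\mathcal{H}^1(\mathbf{x})$, where $\mathcal{H}^1$ is the one-dimensional Hausdorff measure. *)

From Stdlib Require Import Reals Lra.
From Coquelicot Require Import Coquelicot.
Open Scope R_scope.

Definition pt := (R * R)%type.

Definition sqnorm (x : pt) : R := fst x ^ 2 + snd x ^ 2.
Definition dist2 (a b : pt) : R := sqrt ((fst b - fst a) ^ 2 + (snd b - snd a) ^ 2).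

Definition gauss_weight (x : pt) : R := exp (- sqnorm x / 2).

Definition seg_point (a b : pt) (t : R) : pt :=
  (fst a + t * (fst b - fst a), snd a + t * (snd b - snd a)).

(* Integral of f over the segment [a,b] with respect to the one-dimensional
   Hausdorff measure H^1 = arc length: int_0^1 f(a + t(b-a)) |b-a| dt. *)
Definition seg_integral (f : pt -> R) (a b : pt) : R :=
  RInt (fun t => f (seg_point a b t)) 0 1 * dist2 a b.

(* Vertices of a convex polygon listed cyclically: v 0, ..., v (n-1). *)
Definition gaussian_perimeter_polygon (n : nat) (v : nat -> pt) : R :=
  / (2 * PI) *
  sum_f_R0 (fun k => seg_integral gauss_weight (v k) (v (Nat.modulo (S k) n))) (pred n).

Definition regular_ngon_vertex (n : nat) (r theta : R) (k : nat) : pt :=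
  (r * cos (theta + 2 * PI * INR k / INR n), r * sin (theta + 2 * PI * INR k / INR n)).

Definition gaussian_perimeter_regular_ngon (n : nat) (r theta : R) : R :=
  gaussian_perimeter_polygon n (regular_ngon_vertex n r theta).

From Stdlib Require Import Reals Lra Lia Psatz.
From Coquelicot Require Import Coquelicot.
Open Scope R_scope.

(* Each edge of T_n(r) is a chord of the circle of radius r with central angle
   2 PI / n, so the Gaussian perimeter is n / (2 PI) times the Gaussian integral
   over one chord.  Everything rests on the bound x exp (-x^2/2) <= exp (-1/2).
   For n >= 4 it is applied at the midpoint of the chord, where |x| = r cos (PI/n)
   is smallest, giving a total of at most exp (-1/2) n tan (PI/n) / PI
   <= 4 exp (-1/2) / PI.  For the triangle this is too crude; there the bound is
   applied pointwise along the chord and integrated exactly, which yields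
   2 exp (-1/2) arcsinh (sqrt 3) per edge. *)

Lemma sqnorm_seg_point_circle r a b u :
  sqnorm (seg_point (r * cos a, r * sin a) (r * cos b, r * sin b) u)
  = r ^ 2 * (1 - 2 * u * (1 - u) * (1 - cos (b - a))).
Proof.
  unfold sqnorm, seg_point; cbn [fst snd]. rewrite cos_minus.
  pose proof (sin2_cos2 a) as Ha. pose proof (sin2_cos2 b) as Hb. unfold Rsqr in *.
  transitivity (r ^ 2 * ((1 - u) ^ 2 * (sin a * sin a + cos a * cos a)
                 + u ^ 2 * (sin b * sin b + cos b * cos b)
                 + 2 * u * (1 - u) * (cos b * cos a + sin b * sin a))); [ring|].
  rewrite Ha, Hb. ring.
Qed.

Lemma dist2_circle r a b :
  dist2 (r * cos a, r * sin a) (r * cos b, r * sin b) = sqrt (r ^ 2 * (2 - 2 * cos (b - a))).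
Proof.
  unfold dist2; cbn [fst snd]. rewrite cos_minus. f_equal.
  pose proof (sin2_cos2 a) as Ha. pose proof (sin2_cos2 b) as Hb. unfold Rsqr in *.
  transitivity (r ^ 2 * ((sin a * sin a + cos a * cos a) + (sin b * sin b + cos b * cos b)
                 - 2 * (cos b * cos a + sin b * sin a))); [ring|].
  rewrite Ha, Hb. ring.
Qed.

Definition chord_integral (r c : R) : R :=
  RInt (fun u => exp (- (r ^ 2 * (1 - 2 * u * (1 - u) * (1 - c))) / 2)) 0 1
  * sqrt (r ^ 2 * (2 - 2 * c)).

Lemma seg_integral_gauss_weight_circle r a b :
  seg_integral gauss_weight (r * cos a, r * sin a) (r * cos b, r * sin b)
  = chord_integral r (cos (b - a)).
Proof.
  unfold seg_integral, chord_integral. rewrite dist2_circle. f_equal.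
  apply RInt_ext. intros u _. unfold gauss_weight. now rewrite sqnorm_seg_point_circle.
Qed.

Lemma cos_regular_ngon_edge_angle n theta k : (0 < n)%nat -> (k < n)%nat ->
  cos ((theta + 2 * PI * INR (Nat.modulo (S k) n) / INR n)
       - (theta + 2 * PI * INR k / INR n))
  = cos (2 * PI / INR n).
Proof.
  intros Hn Hk.
  assert (HnR : INR n <> 0) by (apply not_0_INR; lia).
  destruct (Nat.eq_dec (S k) n) as [Hlast | Hinner].
  - (* the closing edge from [v (n-1)] back to [v 0] *)
    rewrite Hlast, Nat.Div0.mod_same. rewrite <- Hlast in HnR |- *.
    replace (theta + 2 * PI * INR 0 / INR (S k) - (theta + 2 * PI * INR k / INR (S k)))
      with (2 * PI / INR (S k) + - (2 * PI))
      by (rewrite S_INR in *; simpl INR; field; exact HnR).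
    rewrite cos_plus, cos_neg, sin_neg, cos_2PI, sin_2PI. ring.
  - rewrite Nat.mod_small by lia. rewrite S_INR. f_equal. field. exact HnR.
Qed.

Lemma gaussian_perimeter_regular_ngonE n r theta : (0 < n)%nat ->
  gaussian_perimeter_regular_ngon n r theta
  = INR n / (2 * PI) * chord_integral r (cos (2 * PI / INR n)).
Proof.
  intros Hn. unfold gaussian_perimeter_regular_ngon, gaussian_perimeter_polygon.
  rewrite (sum_eq _ (fun _ => chord_integral r (cos (2 * PI / INR n)))).
  - rewrite sum_cte, Nat.succ_pred_pos by exact Hn. unfold Rdiv. ring.
  - intros k Hk. unfold regular_ngon_vertex.
    rewrite seg_integral_gauss_weight_circle, cos_regular_ngon_edge_angle by lia.
    reflexivity.
Qed.

Lemma exp_le_compat x y : x <= y -> exp x <= exp y.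
Proof.
  intros [Hlt | ->]; [now left; apply exp_increasing | apply Rle_refl].
Qed.

Lemma exp_neg_sqr_half_le_inv x : 0 < x -> exp (- (x ^ 2) / 2) <= exp (- 1 / 2) / x.
Proof.
  intros Hx.
  (* [x <= exp ((x^2 - 1) / 2)] because [x <= (1 + x^2) / 2 = 1 + (x^2 - 1) / 2]. *)
  assert (Hlin : x <= exp ((x ^ 2 - 1) / 2)).
  { pose proof (exp_ineq1_le ((x ^ 2 - 1) / 2)). pose proof (pow2_ge_0 (x - 1)). lra. }
  assert (Hsplit : exp (- 1 / 2) = exp (- (x ^ 2) / 2) * exp ((x ^ 2 - 1) / 2)).
  { rewrite <- exp_plus. f_equal. field. }
  rewrite Hsplit. apply (Rmult_le_reg_r x); [exact Hx|].
  replace (exp (- (x ^ 2) / 2) * exp ((x ^ 2 - 1) / 2) / x * x)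
    with (exp (- (x ^ 2) / 2) * exp ((x ^ 2 - 1) / 2)) by (field; lra).
  apply Rmult_le_compat_l; [left; apply exp_pos | exact Hlin].
Qed.

Lemma arcsinh_opp x : arcsinh (- x) = - arcsinh x.
Proof.
  unfold arcsinh.
  set (s := sqrt (x ^ 2 + 1)).
  assert (Hs2 : s * s = x ^ 2 + 1) by (apply sqrt_sqrt; nra).
  assert (Hs : 0 < s) by (apply sqrt_lt_R0; pose proof (pow2_ge_0 x); lra).
  assert (Hpos : 0 < x + s) by nra.
  replace ((- x) ^ 2) with (x ^ 2) by ring. fold s.
  rewrite <- ln_Rinv by exact Hpos. f_equal.
  apply (Rmult_eq_reg_r (x + s)); [|lra].
  rewrite Rinv_l by lra. nra.
Qed.

Lemma is_RInt_inv_sqrt_arcsinh a : a <> 0 ->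
  is_RInt (fun u => / sqrt ((a * (2 * u - 1)) ^ 2 + 1)) 0 1 (arcsinh a / a).
Proof.
  intros Ha.
  set (F u := arcsinh (a * (2 * u - 1)) / (2 * a)).
  replace (arcsinh a / a) with (minus (F 1) (F 0)).
  2:{ unfold F, minus, plus, opp; simpl.
      replace (a * (2 * 1 - 1)) with a by ring.
      replace (a * (2 * 0 - 1)) with (- a) by ring.
      rewrite arcsinh_opp. field. exact Ha. }
  apply (is_RInt_derive F).
  - intros u _. unfold F.
    assert (Hq : 0 < (a * (2 * u - 1)) ^ 2 + 1) by (pose proof (pow2_ge_0 (a * (2 * u - 1))); lra).
    assert (Hs : 0 < sqrt ((a * (2 * u - 1)) ^ 2 + 1)) by (apply sqrt_lt_R0; exact Hq).
    assert (Hin : is_derive (fun u => a * (2 * u - 1)) u (2 * a))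
      by (auto_derive; [exact I | ring]).
    assert (Hout := proj2 (is_derive_Reals _ _ _) (derivable_pt_lim_arcsinh (a * (2 * u - 1)))).
    replace (/ sqrt ((a * (2 * u - 1)) ^ 2 + 1))
      with (/ (2 * a) * (2 * a * / sqrt ((a * (2 * u - 1)) ^ 2 + 1))) by (field; lra).
    apply (is_derive_ext (fun x => / (2 * a) * arcsinh (a * (2 * x - 1))));
      [intros t; apply Rmult_comm |].
    apply (is_derive_scal (fun x => arcsinh (a * (2 * x - 1))) u (/ (2 * a))).
    exact (is_derive_comp _ _ u _ _ Hout Hin).
  - intros u _.
    assert (Hq : 0 < (a * (2 * u - 1)) ^ 2 + 1) by (pose proof (pow2_ge_0 (a * (2 * u - 1))); lra).
    assert (Hs : 0 < sqrt ((a * (2 * u - 1)) ^ 2 + 1)) by (apply sqrt_lt_R0; exact Hq).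
    apply (@ex_derive_continuous R_AbsRing R_NormedModule).
    auto_derive.
    replace (a * (2 * u + - (1)) * (a * (2 * u + - (1)) * 1) + 1)
      with ((a * (2 * u - 1)) ^ 2 + 1) by ring.
    repeat split; lra.
Qed.

Lemma ex_RInt_chord_integrand r c :
  ex_RInt (fun u => exp (- (r ^ 2 * (1 - 2 * u * (1 - u) * (1 - c))) / 2)) 0 1.
Proof.
  apply (@ex_RInt_continuous R_CompleteNormedModule). intros u _.
  apply (@ex_derive_continuous R_AbsRing R_NormedModule). auto_derive. exact I.
Qed.

(* On a chord, [|x|] is smallest at the midpoint, where it equals the apothem [r cos t]. *)
Lemma chord_integral_le_apothem r t : 0 < r -> 0 < sin t ->
  chord_integral r (cos (2 * t)) <= exp (- ((r * cos t) ^ 2) / 2) * (2 * r * sin t).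
Proof.
  intros Hr Hs. unfold chord_integral. rewrite cos_2a_sin.
  replace (r ^ 2 * (2 - 2 * (1 - 2 * sin t * sin t))) with ((2 * r * sin t) ^ 2) by ring.
  rewrite sqrt_pow2 by nra.
  apply Rmult_le_compat_r; [nra |].
  replace (exp (- ((r * cos t) ^ 2) / 2)) with (RInt (fun _ => exp (- ((r * cos t) ^ 2) / 2)) 0 1)
    by (rewrite RInt_const; unfold scal; simpl; unfold mult; simpl; ring).
  apply RInt_le; [lra | apply ex_RInt_chord_integrand | apply ex_RInt_const |].
  intros u _. apply exp_le_compat.
  pose proof (sin2_cos2 t) as Hsc. unfold Rsqr in Hsc.
  assert (Hmid : r ^ 2 * (1 - 2 * u * (1 - u) * (1 - (1 - 2 * sin t * sin t)))
                 = (r * cos t) ^ 2 + (r * sin t * (2 * u - 1)) ^ 2).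
  { replace ((r * cos t) ^ 2) with (r ^ 2 * (1 - sin t * sin t)) by (rewrite <- Hsc; ring).
    ring. }
  rewrite Hmid. pose proof (pow2_ge_0 (r * sin t * (2 * u - 1))). lra.
Qed.

Lemma chord_integral_le_tan r t : 0 < r -> 0 < t < PI / 2 ->
  chord_integral r (cos (2 * t)) <= 2 * exp (- 1 / 2) * tan t.
Proof.
  intros Hr Ht.
  assert (Hs : 0 < sin t) by (apply sin_gt_0; lra).
  assert (Hc : 0 < cos t) by (apply cos_gt_0; lra).
  eapply Rle_trans; [now apply chord_integral_le_apothem |].
  eapply Rle_trans.
  - apply Rmult_le_compat_r; [nra |].
    apply exp_neg_sqr_half_le_inv. nra.
  - right. unfold tan. field. lra.
Qed.

Lemma chord_integral_third_le r : 0 < r ->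
  chord_integral r (- (1 / 2)) <= 2 * exp (- 1 / 2) * arcsinh (sqrt 3).
Proof.
  intros Hr. unfold chord_integral.
  assert (Hs3 : sqrt 3 * sqrt 3 = 3) by (apply sqrt_sqrt; lra).
  assert (Hs3pos : 0 < sqrt 3) by (apply sqrt_lt_R0; lra).
  replace (r ^ 2 * (2 - 2 * - (1 / 2))) with ((r * sqrt 3) ^ 2)
    by (transitivity (r ^ 2 * (sqrt 3 * sqrt 3)); [ring | rewrite Hs3; field]).
  rewrite sqrt_pow2 by nra.
  set (K := 2 * exp (- 1 / 2) / r).
  assert (Hint : is_RInt (fun u => K * / sqrt ((sqrt 3 * (2 * u - 1)) ^ 2 + 1)) 0 1
                         (K * (arcsinh (sqrt 3) / sqrt 3))).
  { apply (is_RInt_scal (V := R_NormedModule) _ _ _ K). apply is_RInt_inv_sqrt_arcsinh. lra. }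
  (* With [x = r sqrt (1 + 3 (2u-1)^2) / 2], the integrand is [exp (-x^2/2) <= e^(-1/2) / x]. *)
  assert (Hle : RInt (fun u => exp (- (r ^ 2 * (1 - 2 * u * (1 - u) * (1 - - (1 / 2)))) / 2)) 0 1
                <= K * (arcsinh (sqrt 3) / sqrt 3)).
  { rewrite <- (is_RInt_unique _ _ _ _ Hint).
    apply RInt_le; [lra | apply ex_RInt_chord_integrand | eexists; exact Hint |].
    intros u _.
    set (q := (sqrt 3 * (2 * u - 1)) ^ 2 + 1).
    assert (Hq : 0 < q) by (pose proof (pow2_ge_0 (sqrt 3 * (2 * u - 1))); unfold q; lra).
    assert (HS2 : sqrt q * sqrt q = q) by (apply sqrt_sqrt; lra).
    assert (HS : 0 < sqrt q) by (apply sqrt_lt_R0; exact Hq).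
    replace (r ^ 2 * (1 - 2 * u * (1 - u) * (1 - - (1 / 2)))) with ((r * sqrt q / 2) ^ 2).
    2:{ transitivity (r ^ 2 * (sqrt q * sqrt q) / 4); [field |].
        rewrite HS2. unfold q.
        transitivity (r ^ 2 * ((sqrt 3 * sqrt 3) * (2 * u - 1) ^ 2 + 1) / 4); [field |].
        rewrite Hs3. field. }
    eapply Rle_trans; [apply exp_neg_sqr_half_le_inv; apply Rdiv_lt_0_compat; nra |].
    right. unfold K. field. lra. }
  eapply Rle_trans; [apply Rmult_le_compat_r; [nra | exact Hle] |].
  right. unfold K. field. lra.
Qed.

Lemma PI_bounds : 3.14 < PI < 3.1416.
Proof.
  destruct (PI_2_3_7_ineq 2) as [Hlo Hhi].
  unfold tg_alt, PI_2_3_7_tg, Ratan_seq in *. simpl in *. lra.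
Qed.

Lemma exp_neg_half_lt : exp (- 1 / 2) < 0.609.
Proof.
  assert (Htaylor := exp_ge_taylor (1 / 2) 4 ltac:(lra)).
  simpl in Htaylor.
  assert (Hinv : exp (- 1 / 2) * exp (1 / 2) = 1)
    by (rewrite <- exp_plus; replace (- 1 / 2 + 1 / 2) with 0 by field; apply exp_0).
  pose proof (exp_pos (- 1 / 2)). nra.
Qed.

Lemma arcsinh_sqrt3_le : arcsinh (sqrt 3) <= 1.36.
Proof.
  assert (Hs3 : sqrt 3 * sqrt 3 = 3) by (apply sqrt_sqrt; lra).
  assert (Hs3lt : sqrt 3 < 1.7321) by (pose proof (sqrt_pos 3); nra).
  unfold arcsinh.
  replace (sqrt 3 ^ 2 + 1) with (2 * 2) by (simpl; lra).
  rewrite sqrt_square by lra.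
  rewrite <- (ln_exp 1.36). apply ln_le; [pose proof (sqrt_pos 3); lra |].
  assert (Htaylor := exp_ge_taylor 1.36 5 ltac:(lra)).
  simpl in Htaylor. lra.
Qed.

Lemma sqrt_2_div_PI_gt : 5 / (2 * PI) < sqrt (2 / PI).
Proof.
  pose proof PI_bounds.
  rewrite <- (sqrt_pow2 (5 / (2 * PI))) by (apply Rlt_le, Rdiv_lt_0_compat; lra).
  apply sqrt_lt_1; [apply pow2_ge_0 | apply Rlt_le, Rdiv_lt_0_compat; lra |].
  replace ((5 / (2 * PI)) ^ 2) with (2 / PI * (25 / (8 * PI))) by (field; lra).
  rewrite <- (Rmult_1_r (2 / PI)) at 2.
  apply Rmult_lt_compat_l; [apply Rdiv_lt_0_compat; lra |].
  apply (Rmult_lt_reg_r (8 * PI)); [lra |].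
  unfold Rdiv. rewrite Rmult_assoc, Rinv_l by lra. lra.
Qed.

Lemma INR_mul_tan_PI_div_le n : (4 <= n)%nat -> INR n * tan (PI / INR n) <= 4.
Proof.
  intros Hn. pose proof PI_bounds.
  assert (HnR : 4 <= INR n) by (replace 4 with (INR 4) by (simpl; lra); now apply le_INR).
  destruct (Nat.eq_dec n 4) as [-> | Hn5].
  - replace (INR 4) with 4 by (simpl; lra). rewrite tan_PI4. lra.
  - assert (Hn5R : 5 <= INR n) by (replace 5 with (INR 5) by (simpl; lra); apply le_INR; lia).
    set (t := PI / INR n).
    assert (Ht0 : 0 < t) by (apply Rdiv_lt_0_compat; lra).
    assert (Ht5 : t <= PI / 5)
      by (unfold t; apply Rmult_le_compat_l; [lra | apply Rinv_le_contravar; lra]).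
    assert (Hnt : INR n * t = PI) by (unfold t; field; lra).
    assert (Hsin : INR n * sin t <= PI) by (pose proof (sin_lt_x t Ht0); nra).
    (* [cos t = 1 - 2 sin (t/2)^2 >= 1 - t^2/2 > 0.8] since [t <= PI/5]. *)
    assert (Hcos : 0.8 <= cos t).
    { replace t with (2 * (t / 2)) by field. rewrite cos_2a_sin.
      assert (0 < sin (t / 2)) by (apply sin_gt_0; lra).
      pose proof (sin_lt_x (t / 2) ltac:(lra)). nra. }
    unfold tan. apply (Rmult_le_reg_r (cos t)); [lra |].
    replace (INR n * (sin t / cos t) * cos t) with (INR n * sin t) by (field; lra).
    lra.
Qed.

Lemma regular_triangle_chord_sum_le r : 0 < r ->
  INR 3 * chord_integral r (cos (2 * PI / INR 3)) <= 5.
Proof.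
  intros Hr.
  replace (2 * PI / INR 3) with (PI - PI / 3) by (simpl; field).
  rewrite cos_minus, cos_PI, sin_PI, cos_PI3.
  replace (-1 * (1 / 2) + 0 * sin (PI / 3)) with (- (1 / 2)) by ring.
  pose proof (chord_integral_third_le r Hr).
  pose proof exp_neg_half_lt. pose proof (exp_pos (- 1 / 2)). pose proof arcsinh_sqrt3_le.
  simpl INR. nra.
Qed.

Lemma regular_ngon_chord_sum_le n r : (4 <= n)%nat -> 0 < r ->
  INR n * chord_integral r (cos (2 * PI / INR n)) <= 5.
Proof.
  intros Hn Hr. pose proof PI_bounds.
  assert (HnR : 4 <= INR n) by (replace 4 with (INR 4) by (simpl; lra); now apply le_INR).
  assert (Ht : 0 < PI / INR n < PI / 2).
  { split; [apply Rdiv_lt_0_compat; lra |].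
    apply Rmult_lt_compat_l; [lra | apply Rinv_lt_contravar; lra]. }
  replace (2 * PI / INR n) with (2 * (PI / INR n)) by (field; lra).
  pose proof (chord_integral_le_tan r _ Hr Ht).
  pose proof (INR_mul_tan_PI_div_le n Hn).
  pose proof exp_neg_half_lt. pose proof (exp_pos (- 1 / 2)).
  nra.
Qed.

Theorem proposition2p3 (n : nat) (r theta : R) :
  (3 <= n)%nat -> 0 < r ->
  gaussian_perimeter_regular_ngon n r theta < sqrt (2 / PI).
Proof.
  intros Hn Hr. pose proof PI_bounds.
  rewrite gaussian_perimeter_regular_ngonE by lia.
  apply Rle_lt_trans with (5 / (2 * PI)); [| exact sqrt_2_div_PI_gt].
  replace (INR n / (2 * PI) * chord_integral r (cos (2 * PI / INR n)))
    with (INR n * chord_integral r (cos (2 * PI / INR n)) / (2 * PI)) by (field; lra).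
  apply Rmult_le_compat_r; [left; apply Rinv_0_lt_compat; lra |].
  destruct (Nat.eq_dec n 3) as [-> | Hn4].
  - now apply regular_triangle_chord_sum_le.
  - apply regular_ngon_chord_sum_le; [lia | exact Hr].
Qed.
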